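(* Let $T=(T_{r,k})_{r,k\ge 0}$ be a number triangle such that every major diagonal $(T_{r,k})_{k\ge 0}$ and every minor diagonal $(T_{r,k})_{r\ge 0}$ is an arithmetic sequence of integers. Then $T$ is a Generalized Rascal Triangle: there exist $c,d,d_1,d_2\in\mathbb{Z}$ with $T_{r,k}=c+kd_1+rd_2+rkd$ for all $r,k\ge 0$.
   Context: A number triangle is an array of integers $T_{r,k}$ indexed by integers $r,k\ge 0$, arranged so that row $n$ consists of entries with $r+k=n$. For $c,d,d_1,d_2\in\mathbb{Z}$, the Generalized Rascal Triangle $T(c,d,d_1,d_2)$ is the number triangle with $T_{r,k}=c+kd_1+rd_2+rkd$. *)

From Stdlib Require Import ZArith.
Open Scope Z_scope.

Definition arithmetic_seq (s : nat -> Z) : Prop :=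
  exists a d : Z, forall n : nat, s n = a + Z.of_nat n * d.

Definition gen_rascal (c d d1 d2 : Z) (r k : nat) : Z :=
  c + Z.of_nat k * d1 + Z.of_nat r * d2 + Z.of_nat r * Z.of_nat k * d.

(* Each major diagonal is determined by its first two entries, and these two
   entries are themselves affine in r (they lie on the minor diagonals k = 0
   and k = 1); so T is affine in k with coefficients affine in r, i.e. of the
   form c + k d1 + r d2 + r k d.  Only two minor diagonals are needed. *)

From Stdlib Require Import ZArith Lia.
Open Scope Z_scope.

Lemma arithmetic_seqE (s : nat -> Z) : arithmetic_seq s ->
  forall n, s n = s 0%nat + Z.of_nat n * (s 1%nat - s 0%nat).
Proof.
  intros [a [d Hs]] n.
  rewrite (Hs n), (Hs 0%nat), (Hs 1%nat); cbn [Z.of_nat].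
  lia.
Qed.

Lemma gen_rascal_of_arithmetic (T : nat -> nat -> Z)
  (Hmajor : forall r : nat, arithmetic_seq (fun k => T r k))
  (Hminor0 : arithmetic_seq (fun r => T r 0%nat))
  (Hminor1 : arithmetic_seq (fun r => T r 1%nat)) (r k : nat) :
  T r k = gen_rascal (T 0%nat 0%nat)
            (T 1%nat 1%nat - T 0%nat 1%nat - T 1%nat 0%nat + T 0%nat 0%nat)
            (T 0%nat 1%nat - T 0%nat 0%nat) (T 1%nat 0%nat - T 0%nat 0%nat) r k.
Proof.
  unfold gen_rascal.
  rewrite (arithmetic_seqE _ (Hmajor r) k).
  rewrite (arithmetic_seqE _ Hminor0 r), (arithmetic_seqE _ Hminor1 r).
  cbn [Z.of_nat].
  ring.
Qed.

Theorem mainTheorem6 (T : nat -> nat -> Z)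
  (Hmajor : forall r : nat, arithmetic_seq (fun k => T r k))
  (Hminor : forall k : nat, arithmetic_seq (fun r => T r k)) :
  exists c d d1 d2 : Z, forall r k : nat, T r k = gen_rascal c d d1 d2 r k.
Proof.
  do 4 eexists.
  exact (gen_rascal_of_arithmetic T Hmajor (Hminor 0%nat) (Hminor 1%nat)).
Qed.
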